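(* Let $K\ge2$, $r\in[0,1]^K$, $a^*\in\arg\max_{a\in[K]}r(a)$, and $\Delta := r(a^* )-\max_{a\ne a^*}r(a)$. Then for any probability vector $\pi$ on $[K]$, $$\sum_{i=1}^K\pi(i)^2\left|r(i)-\pi^\top r\right|^3\ge\frac{\Delta}{K-1}\,\pi(a^* )^2\left(r(a^* )-\pi^\top r\right)^2.$$ *)

From mathcomp Require Import all_boot all_order all_algebra.
Set Implicit Arguments. Unset Strict Implicit. Unset Printing Implicit Defensive.
Import Order.TTheory GRing.Theory Num.Theory.
Local Open Scope ring_scope.

Definition dotv (R : realFieldType) (K : nat) (pi r : 'I_K -> R) : R :=
  \sum_(i < K) pi i * r i.

Definition prob_vec (R : realFieldType) (K : nat) (pi : 'I_K -> R) : Prop :=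
  (forall i, 0 <= pi i) /\ \sum_(i < K) pi i = 1.

(* max_{a <> astar} r a ; since r takes values in [0,1] and K >= 2,
   folding Num.max from 0 gives exactly the maximum *)
Definition max_other (R : realFieldType) (K : nat) (r : 'I_K -> R) (astar : 'I_K) : R :=
  \big[Num.max/0]_(a < K | a != astar) r a.

Definition gap (R : realFieldType) (K : nat) (r : 'I_K -> R) (astar : 'I_K) : R :=
  r astar - max_other r astar.

From mathcomp Require Import all_boot all_order all_algebra.
From mathcomp Require Import ring lra.
Set Implicit Arguments.
Unset Strict Implicit.
Unset Printing Implicit Defensive.
Import Order.TTheory GRing.Theory Num.Theory.
Local Open Scope ring_scope.

(* Write m = pi^T r, d = r(astar) - m >= 0 and p = pi(astar). The deviations from m
   average to zero under pi, so p d = sum_{i <> astar} pi_i (m - r_i) and, by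
   Cauchy-Schwarz, S := sum_{i <> astar} (pi_i (m - r_i))^2 >= (p d)^2 / (K - 1).
   With Delta = gap r astar, every i <> astar has m - r_i >= Delta - d, hence
   pi_i^2 |r_i - m|^3 >= (Delta - d) (pi_i (m - r_i))^2.
   If d >= Delta the term p^2 d^3 of astar alone exceeds the bound; otherwise
   p^2 d^3 + (Delta - d) (p d)^2 / (K - 1) >= Delta (p d)^2 / (K - 1). *)

Lemma sqr_sum_le_card_sum_sqr (R : realDomainType) (I : finType) (P : pred I) (x : I -> R) :
  (\sum_(i | P i) x i) ^+ 2 <= #|P|%:R * \sum_(i | P i) x i ^+ 2.
Proof.
set s := \sum_(i | P i) x i; set q := \sum_(i | P i) x i ^+ 2; set n : R := #|P|%:R.
have inner i : \sum_(j | P j) (x i - x j) ^+ 2 = n * x i ^+ 2 - 2 * x i * s + q.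
  under eq_bigr => j _ do rewrite sqrrB.
  rewrite big_split sumrB /= sumr_const -[_ *+ #|P|]mulr_natl -/q.
  under [X in _ - X]eq_bigr => j _ do rewrite -mulr_natl mulrA.
  rewrite -mulr_sumr -/s; ring.
have pairs : \sum_(i | P i) \sum_(j | P j) (x i - x j) ^+ 2 = 2 * (n * q - s ^+ 2).
  under eq_bigr => i _ do rewrite inner.
  rewrite big_split sumrB /= sumr_const -[q *+ _]mulr_natl -mulr_sumr -/q.
  rewrite -mulr_suml -mulr_sumr -/s; ring.
have : 0 <= \sum_(i | P i) \sum_(j | P j) (x i - x j) ^+ 2.
  by apply: sumr_ge0 => i _; apply: sumr_ge0 => j _; apply: sqr_ge0.
by rewrite pairs pmulr_rge0 // subr_ge0.
Qed.

Lemma two_regime_bound (R : realFieldType) (D d k p S T : R) :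
  0 <= d -> 1 <= k -> (p * d) ^+ 2 <= k * S -> 0 <= T -> (D - d) * S <= T ->
  D / k * (p ^+ 2 * d ^+ 2) <= p ^+ 2 * d ^+ 3 + T.
Proof.
move=> d_ge0 k_ge1 cs T_ge0 tail.
have k_gt0 : 0 < k by apply: lt_le_trans k_ge1.
rewrite mulrAC ler_pdivrMr // -exprMn.
set q := (p * d) ^+ 2.
have q_ge0 : 0 <= q by apply: sqr_ge0.
have -> : p ^+ 2 * d ^+ 3 = q * d by rewrite /q; ring.
have qd_k : q * d <= q * d * k by rewrite ler_peMr // mulr_ge0.
have kT_ge0 : 0 <= T * k by rewrite mulr_ge0 // ltW.
case: (lerP D d) => [D_le_d | d_lt_D].
- have : D * q <= d * q by rewrite ler_wpM2r.
  lra.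
- have : (D - d) * q <= k * T.
    apply: le_trans (_ : (D - d) * (k * S) <= _); first by rewrite ler_wpM2l // subr_ge0 ltW.
    by rewrite mulrCA ler_wpM2l // ltW.
  lra.
Qed.

Lemma mul_sqr_le_norm3 (R : realDomainType) (c y : R) :
  c <= y -> c * y ^+ 2 <= `|y| ^+ 3.
Proof.
move=> c_le_y; case: (lerP 0 y) => [y_ge0 | y_lt0].
  by rewrite ger0_norm // [y ^+ 3]exprSr (mulrC c) ler_wpM2l ?sqr_ge0.
apply: le_trans (_ : 0 <= _); last exact: exprn_ge0.
by rewrite mulr_le0_ge0 ?sqr_ge0 // ltW // (le_lt_trans c_le_y y_lt0).
Qed.

Lemma le_max_other (R : realFieldType) (K : nat) (r : 'I_K -> R) (a i : 'I_K) :
  i != a -> r i <= max_other r a.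
Proof. by move=> ia; rewrite /max_other (bigD1 i) //= le_max lexx. Qed.

Lemma gap_le_sub (R : realFieldType) (K : nat) (r : 'I_K -> R) (a i : 'I_K) :
  i != a -> gap r a <= r a - r i.
Proof. by move=> ia; rewrite /gap lerD2l lerN2 le_max_other. Qed.

Section ProbVec.

Variables (R : realFieldType) (K : nat) (pi r : 'I_K -> R).
Hypothesis pi_prob : prob_vec pi.

Lemma dotv_le_ub (c : R) : (forall i, r i <= c) -> dotv pi r <= c.
Proof.
case: pi_prob => pi_ge0 pi_sum1 r_le_c.
rewrite /dotv -[c]mul1r -pi_sum1 mulr_suml; apply: ler_sum => i _.
by rewrite ler_wpM2l.
Qed.

Lemma sum_weighted_dev_eq0 : \sum_(i < K) pi i * (r i - dotv pi r) = 0.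
Proof.
case: pi_prob => _ pi_sum1.
under eq_bigr => i _ do rewrite mulrBr.
by rewrite sumrB -mulr_suml pi_sum1 mul1r subrr.
Qed.

Lemma weighted_dev_bigD1 (a : 'I_K) :
  pi a * (r a - dotv pi r) = \sum_(i | i != a) pi i * (dotv pi r - r i).
Proof.
move/eqP: sum_weighted_dev_eq0; rewrite (bigD1 a) //= addr_eq0 => /eqP ->.
by rewrite -sumrN; apply: eq_bigr => i _; rewrite -mulrN opprB.
Qed.

End ProbVec.

Theorem lemma16 (R : realFieldType) (K : nat) (hK : (2 <= K)%N)
  (r : 'I_K -> R) (hr : forall a, 0 <= r a <= 1)
  (astar : 'I_K) (hastar : forall a, r a <= r astar)
  (pi : 'I_K -> R) (hpi : prob_vec pi) :
  \sum_(i < K) pi i ^+ 2 * `|r i - dotv pi r| ^+ 3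
    >= gap r astar / (K - 1)%:R * (pi astar ^+ 2 * (r astar - dotv pi r) ^+ 2).
Proof.
set m := dotv pi r; set d := r astar - m.
set S := \sum_(i | i != astar) (pi i * (m - r i)) ^+ 2.
have d_ge0 : 0 <= d by rewrite subr_ge0 dotv_le_ub.
have k_ge1 : 1 <= (K - 1)%:R :> R by rewrite ler1n subn_gt0.
have cs : (pi astar * d) ^+ 2 <= (K - 1)%:R * S.
  have card_other : #|(fun i : 'I_K => i != astar)| = (K - 1)%N.
    by rewrite cardC1 card_ord subn1.
  by rewrite /d weighted_dev_bigD1 // -card_other sqr_sum_le_card_sum_sqr.
have tail : (gap r astar - d) * S
    <= \sum_(i | i != astar) pi i ^+ 2 * `|r i - m| ^+ 3.
  rewrite mulr_sumr; apply: ler_sum => i i_other.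
  rewrite exprMn mulrCA distrC ler_wpM2l ?sqr_ge0 // mul_sqr_le_norm3 //.
  by have := gap_le_sub r i_other; rewrite /d; lra.
rewrite (bigD1 astar) //= -/d ger0_norm //.
apply: two_regime_bound cs _ tail => //.
by apply: sumr_ge0 => i _; rewrite mulr_ge0 ?sqr_ge0 ?exprn_ge0.
Qed.
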